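(* Let $\sigma$ be an implicit signature and $\mathsf V$ a pseudovariety of finite semigroups. If $\mathsf V$ is $\sigma$-PR then $\mathsf V$ is $\sigma$-full; and if $\mathsf V$ is strongly $\sigma$-PR then $\mathsf V$ is strongly $\sigma$-full.
   Context: $\overline{\Omega}_X\mathsf V$ is the free pro-$\mathsf V$ semigroup on a finite alphabet $X$; $\Omega^\sigma_X\mathsf V$ is its subalgebra generated by $X$ under the operations of $\sigma$ (an implicit signature: a set of implicit operations of finite arity containing multiplication), with the induced topology; $\mathsf S$ is the pseudovariety of all finite semigroups and $p_{\mathsf V}:\overline{\Omega}_X\mathsf S\to\overline{\Omega}_X\mathsf V$ the natural continuous homomorphism. The Pin-Reutenauer procedure holds for a class $\mathcal C$ of subsets of $\Omega^\sigma_X\mathsf V$ if for all $K,L\in\mathcal C$, with closures in $\Omega^\sigma_X\mathsf V$, $\overline{KL}=\overline K\,\overline L$ and $\overline{L^+}=\langle\overline L\rangle_\sigma$ (the $\sigma$-subalgebra generated by $\overline L$). $\mathsf V$ is $\sigma$-PR if for every finite $X$ this holds for the class of all sets $p_{\mathsf V}(L)$ with $L\subseteq X^+$ rational, and strongly $\sigma$-PR if for every finite $X$ it holds for the class of all rational subsets of $\Omega^\sigma_X\mathsf V$. $\mathsf V$ is full with respect to a class $\mathcal C$ of subsets of $\Omega^\sigma_X\mathsf S$ if $p_{\mathsf V}(\overline L)=\overline{p_{\mathsf V}(L)}$ for all $L\in\mathcal C$ (left closure in $\Omega^\sigma_X\mathsf S$, right closure in $\Omega^\sigma_X\mathsf V$);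 $\mathsf V$ is $\sigma$-full if for every finite $X$ it is full with respect to the set of rational languages of $X^+$, and strongly $\sigma$-full if for every finite $X$ it is full with respect to all rational subsets of $\Omega^\sigma_X\mathsf S$. *)

From Stdlib Require Import FunctionalExtensionality List.
From mathcomp Require Import all_boot.
Set Implicit Arguments. Unset Strict Implicit. Unset Printing Implicit Defensive.

Definition seteq {T} (A B : T -> Prop) := forall x, A x <-> B x.
Definition img {T U} (f : T -> U) (A : T -> Prop) : U -> Prop :=
  fun y => exists x, A x /\ y = f x.
Definition setprod {T} (mul : T -> T -> T) (A B : T -> Prop) : T -> Prop :=
  fun x => exists a b, A a /\ B b /\ x = mul a b.
Definition splus {T} (mul : T -> T -> T) (A : T -> Prop) : T -> Prop :=
  fun x => forall B : T -> Prop, (forall a, A a -> B a) ->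
    (forall a b, B a -> B b -> B (mul a b)) -> B x.

(* Rational subsets of a semigroup M (given as a mul-closed subset of T):
   smallest class containing the finite subsets of M and closed under
   union, product and _^+ (closed under extensional equality of sets). *)
Inductive rat {T} (mul : T -> T -> T) (M : T -> Prop) : (T -> Prop) -> Prop :=
| rat_fin (s : seq T) : (forall x, List.In x s -> M x) ->
    rat mul M (fun x => List.In x s)
| rat_union A B : rat mul M A -> rat mul M B -> rat mul M (fun x => A x \/ B x)
| rat_prod A B : rat mul M A -> rat mul M B -> rat mul M (setprod mul A B)
| rat_plus A : rat mul M A -> rat mul M (splus mul A)
| rat_ext A B : rat mul M A -> seteq A B -> rat mul M B.

Record fsg := FSG {
  fsg_n : nat;
  fsg_mul : 'I_fsg_n.+1 -> 'I_fsg_n.+1 -> 'I_fsg_n.+1;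
  fsg_assoc : associative fsg_mul }.
Definition car (S : fsg) := 'I_(fsg_n S).+1.
Definition smul (S : fsg) : car S -> car S -> car S := @fsg_mul S.

Definition is_hom (S T : fsg) (h : car S -> car T) :=
  forall x y, h (smul x y) = smul (h x) (h y).

(* Pseudovariety: contains the trivial semigroup, closed under homomorphic
   images (hence isomorphism), and under subsemigroups of binary direct
   products (which together give finite direct products and subsemigroups). *)
Definition pseudovariety (V : fsg -> Prop) : Prop :=
  (forall S, fsg_n S = 0 -> V S) /\
  (forall S T (h : car S -> car T), V S -> is_hom h ->
      (forall y, exists x, h x = y) -> V T) /\
  (forall P S T (f : car P -> car S) (g : car P -> car T),
      V S -> V T -> is_hom f -> is_hom g ->
      (forall x y, f x = f y -> g x = g y -> x = y) -> V P).

Definition Sall (S : fsg) : Prop := True.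

(* ---------- free pro-V semigroup as implicit operations ---------- *)
Record OB (V : fsg -> Prop) (X : finType) := MkOB {
  ev : forall S : fsg, V S -> (X -> car S) -> car S;
  ev_nat : forall (S T : fsg) (hS : V S) (hT : V T) (h : car S -> car T),
    is_hom h -> forall phi, h (ev hS phi) = ev hT (h \o phi) }.
Arguments ev {V X} o {S} hS phi.

Lemma mulOB_nat V X (a b : OB V X) (S T : fsg) (hS : V S) (hT : V T)
  (h : car S -> car T) : is_hom h -> forall phi,
  h (smul (ev a hS phi) (ev b hS phi)) = smul (ev a hT (h \o phi)) (ev b hT (h \o phi)).
Proof. by move=> hh phi; rewrite hh !(ev_nat _ _ hT hh). Qed.

Definition mulOB V X (a b : OB V X) : OB V X :=
  @MkOB V X (fun S hS phi => smul (ev a hS phi) (ev b hS phi)) (mulOB_nat a b).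

Definition genOB V (X : finType) (x : X) : OB V X :=
  @MkOB V X (fun S _ phi => phi x) (fun _ _ _ _ _ _ _ => erefl).

Lemma applyOB_nat V X k (w : OB Sall 'I_k) (ps : 'I_k -> OB V X)
  (S T : fsg) (hS : V S) (hT : V T) (h : car S -> car T) : is_hom h -> forall phi,
  h (ev w (I : Sall S) (fun i => ev (ps i) hS phi)) =
  ev w (I : Sall T) (fun i => ev (ps i) hT (h \o phi)).
Proof.
move=> hh phi; rewrite (ev_nat w I I hh); congr (ev w I _).
by apply: functional_extensionality => i /=; rewrite (ev_nat _ _ hT hh).
Qed.

Definition applyOB V X k (w : OB Sall 'I_k) (ps : 'I_k -> OB V X) : OB V X :=
  @MkOB V X (fun S hS phi => ev w (I : Sall S) (fun i => ev (ps i) hS phi))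
    (applyOB_nat w ps).

Definition pV (V : fsg -> Prop) X (p : OB Sall X) : OB V X :=
  @MkOB V X (fun S _ phi => ev p (I : Sall S) phi)
    (fun S T _ _ h hh phi => ev_nat p I I hh phi).

(* topology: pointwise convergence (product of finite discrete spaces);
   closure of A = elements agreeing with some element of A on any finite
   set of coordinates (S, phi). *)
Record pt (V : fsg -> Prop) (X : finType) := Pt {
  ptS : fsg; ptV : V ptS; ptphi : X -> car ptS }.
Definition evp V X (p : OB V X) (q : pt V X) := ev p (ptV q) (ptphi q).
Definition cl V X (A : OB V X -> Prop) : OB V X -> Prop :=
  fun p => forall n (qs : 'I_n -> pt V X),
    exists r, A r /\ forall i, evp r (qs i) = evp p (qs i).

Definition signature := forall k : nat, OB Sall 'I_k -> Prop.
Definition implicit_signature (sigma : signature) : Prop :=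
  exists w, sigma 2 w /\ forall (S : fsg) (phi : 'I_2 -> car S),
    ev w (I : Sall S) phi = smul (phi ord0) (phi ord_max).

Definition sigsub V X (sigma : signature) (A : OB V X -> Prop) : OB V X -> Prop :=
  fun p => forall B : OB V X -> Prop, (forall a, A a -> B a) ->
    (forall k w (ps : 'I_k -> OB V X), sigma k w -> (forall i, B (ps i)) ->
       B (applyOB w ps)) -> B p.

Definition Om V X (sigma : signature) : OB V X -> Prop :=
  sigsub sigma (fun p => exists x, p = genOB V x).

Definition clo V X (sigma : signature) (A : OB V X -> Prop) : OB V X -> Prop :=
  fun p => Om sigma p /\ cl A p.

(* nonempty words X^+ as (first letter, rest); concatenation *)
Definition nwmul (X : Type) (u v : X * seq X) : X * seq X :=
  (u.1, u.2 ++ v.1 :: v.2).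
Definition ratlang (X : Type) (L : X * seq X -> Prop) :=
  rat (@nwmul X) (fun _ => True) L.
Definition word (X : finType) (u : X * seq X) : OB Sall X :=
  foldl (fun acc y => mulOB acc (genOB Sall y)) (genOB Sall u.1) u.2.

Definition PR_for V X (sigma : signature) (C : (OB V X -> Prop) -> Prop) :=
  forall K L, C K -> C L ->
    seteq (clo sigma (setprod (@mulOB V X) K L))
          (setprod (@mulOB V X) (clo sigma K) (clo sigma L)) /\
    seteq (clo sigma (splus (@mulOB V X) L)) (sigsub sigma (clo sigma L)).

Definition sigma_PR (V : fsg -> Prop) (sigma : signature) :=
  forall X : finType, PR_for sigma
    (fun K : OB V X -> Prop => exists L, ratlang L /\
       seteq K (img (fun u => @pV V X (word u)) L)).

Definition strongly_sigma_PR (V : fsg -> Prop) (sigma : signature) :=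
  forall X : finType, PR_for sigma (rat (@mulOB V X) (Om sigma)).

Definition full_for (V : fsg -> Prop) X (sigma : signature)
  (C : (OB Sall X -> Prop) -> Prop) :=
  forall L, C L -> seteq (img (@pV V X) (clo sigma L)) (clo sigma (img (@pV V X) L)).

Definition sigma_full (V : fsg -> Prop) (sigma : signature) :=
  forall X : finType, full_for V sigma
    (fun L' => exists L, ratlang L /\ seteq L' (img (@word X) L)).

Definition strongly_sigma_full (V : fsg -> Prop) (sigma : signature) :=
  forall X : finType, full_for V sigma (rat (@mulOB Sall X) (Om sigma)).

(** The inclusion [p_V(cl L) ⊆ cl p_V(L)] is continuity of [p_V]. For the
    converse one inducts on a rational expression of [L]: finite sets are
    closed, closure commutes with finite unions, and the Pin-Reutenauer
    property in [Ω^σ_X V] handles [KL] and [L^+]. For [L^+] it then remains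
    to see that the closure of the subsemigroup [L^+] of [Ω^σ_X S] is closed
    under implicit operations: evaluated at finitely many points, which all
    factor through one finite semigroup [P], an implicit operation lands in
    the subsemigroup of [P] generated by its arguments. *)
From mathcomp Require Import all_boot.
From Stdlib Require Import FunctionalExtensionality ClassicalEpsilon Classical.
From Stdlib Require List.
Set Implicit Arguments. Unset Strict Implicit. Unset Printing Implicit Defensive.

Definition asbool (P : Prop) : bool :=
  if excluded_middle_informative P then true else false.

Lemma asboolP (P : Prop) : reflect P (asbool P).
Proof. by rewrite /asbool; case: excluded_middle_informative => h; constructor. Qed.

Lemma InP (T : eqType) (x : T) (s : seq T) : reflect (List.In x s) (x \in s).
Proof.
elim: s => [|y s IH] /=; first by constructor.
rewrite in_cons; apply: (iffP orP) => -[xy | Hs].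
- by left; apply/esym/eqP.
- by right; apply/IH.
- by left; apply/eqP; rewrite xy.
- by right; apply/IH.
Qed.

Section SplusTheory.
Variables (T : Type) (mul : T -> T -> T) (A : T -> Prop).

Lemma splus_incl a : A a -> splus mul A a.
Proof. by move=> Aa B AB _; apply: AB. Qed.

Lemma splus_mul a b : splus mul A a -> splus mul A b -> splus mul A (mul a b).
Proof. by move=> Ha Hb B AB Bmul; apply: (Bmul); [apply: Ha | apply: Hb]. Qed.

End SplusTheory.

Section Images.
Variables (T U : Type) (f : T -> U).

Lemma img_ext A B : seteq A B -> seteq (img f A) (img f B).
Proof. by move=> E y; split => -[x [/E Ax ->]]; exists x. Qed.

Lemma img_union A B :
  seteq (img f (fun x => A x \/ B x)) (fun y => img f A y \/ img f B y).
Proof.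
move=> y; split; first by move=> [x [[Ax|Bx] ->]]; [left|right]; exists x.
by move=> [[x [Ax ->]]|[x [Bx ->]]]; exists x; split => //; [left|right].
Qed.

Lemma img_fin (s : seq T) :
  seteq (img f (fun x => List.In x s)) (fun y => List.In y (List.map f s)).
Proof.
move=> y; split; first by move=> [x [Hx ->]]; apply: List.in_map.
by move/List.in_map_iff => [x [<- Hx]]; exists x.
Qed.

Lemma img_comp (W : Type) (g : U -> W) A :
  seteq (img g (img f A)) (img (fun x => g (f x)) A).
Proof.
move=> z; split; first by move=> [_ [[x [Ax ->]] ->]]; exists x.
by move=> [x [Ax ->]]; exists (f x); split => //; exists x.
Qed.

Variables (m1 : T -> T -> T) (m2 : U -> U -> U).
Hypothesis f_mul : forall a b, f (m1 a b) = m2 (f a) (f b).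

Lemma img_prod A B : seteq (img f (setprod m1 A B)) (setprod m2 (img f A) (img f B)).
Proof.
move=> y; split.
  move=> [_ [[a [b [Aa [Bb ->]]]] ->]]; exists (f a), (f b).
  by split; [exists a | split; [exists b | rewrite f_mul]].
move=> [_ [_ [[a [Aa ->]] [[b [Bb ->]] ->]]]].
by exists (m1 a b); split; [exists a, b | rewrite f_mul].
Qed.

Lemma img_plus A : seteq (img f (splus m1 A)) (splus m2 (img f A)).
Proof.
move=> y; split.
  move=> [x [Hx ->]] B AB Bmul; apply: (Hx (fun x => B (f x))).
    by move=> a Aa; apply: AB; exists a.
  by move=> a b Ba Bb; rewrite f_mul; apply: Bmul.
move=> Hy; apply: (Hy (img f (splus m1 A))).
  by move=> _ [a [Aa ->]]; exists a; split => //; apply: splus_incl.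
move=> _ _ [a [Ha ->]] [b [Hb ->]].
by exists (m1 a b); split; [apply: splus_mul | rewrite f_mul].
Qed.

End Images.

Lemma seteq_sym T (A B : T -> Prop) : seteq A B -> seteq B A.
Proof. by move=> E x; split => /E. Qed.

Lemma img_id T (A : T -> Prop) : seteq (img id A) A.
Proof. by move=> x; split => [[y [Ay ->]] | Ax] //; exists x. Qed.

Section FsgOfFinType.
Variables (F : finType) (op : F -> F -> F) (x0 : F).
Hypothesis opA : associative op.

Lemma card_predS : #|F| = (#|F|.-1).+1.
Proof. by rewrite prednK //; apply/card_gt0P; exists x0. Qed.

Definition enc (x : F) : 'I_(#|F|.-1).+1 := cast_ord card_predS (enum_rank x).
Definition dec (a : 'I_(#|F|.-1).+1) : F := enum_val (cast_ord (esym card_predS) a).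

Lemma encK : cancel enc dec.
Proof. by move=> x; rewrite /enc /dec cast_ordK enum_rankK. Qed.

Definition enc_mul a b := enc (op (dec a) (dec b)).

Lemma enc_mulA : associative enc_mul.
Proof. by move=> a b c; rewrite /enc_mul !encK opA. Qed.

Definition fsg_of : fsg := FSG enc_mulA.

Lemma dec_mul (a b : car fsg_of) : dec (smul a b) = op (dec a) (dec b).
Proof. exact: encK. Qed.

End FsgOfFinType.

Definition trivial_fsg : fsg := @FSG 0 (fun _ _ => ord0) (fun _ _ _ => erefl).

Definition prod_mul (S T : fsg) (a b : car S * car T) : car S * car T :=
  (smul a.1 b.1, smul a.2 b.2).

Lemma prod_mulA S T : associative (@prod_mul S T).
Proof. by move=> a b c; rewrite /prod_mul /smul !fsg_assoc. Qed.

Definition prod_fsg (S T : fsg) : fsg := fsg_of (ord0, ord0) (@prod_mulA S T).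

Lemma points_factor_through_fsg (X : finType) (s : seq (pt Sall X)) :
  exists (P : fsg) (g : X -> car P), forall q, List.In q s ->
    exists pi : car P -> car (ptS q), is_hom pi /\ forall x, pi (g x) = ptphi q x.
Proof.
elim: s => [|q s [P [g IH]]]; first by exists trivial_fsg, (fun _ => ord0).
exists (prod_fsg P (ptS q)), (fun x => enc (ord0, ord0) (g x, ptphi q x)).
move=> q' [<- | /IH [pi [pi_hom pi_g]]].
- exists (fun a => (dec (ord0, ord0) a).2).
  by split => [a b | x]; rewrite ?dec_mul ?encK.
- exists (fun a => pi (dec (ord0, ord0) a).1).
  by split => [a b | x]; rewrite ?dec_mul ?encK /= ?pi_hom ?pi_g.
Qed.

Lemma OB_ext V X (a b : OB V X) :
  (forall S (hS : V S) phi, ev a hS phi = ev b hS phi) -> a = b.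
Proof.
case: a b => ea na [eb nb] /= E.
have eab : ea = eb.
  apply: functional_extensionality_dep => S.
  apply: functional_extensionality_dep => hS.
  by apply: functional_extensionality => phi; apply: E.
by subst eb; f_equal; apply: proof_irrelevance.
Qed.

Lemma mulOB_assoc V X (a b c : OB V X) : mulOB (mulOB a b) c = mulOB a (mulOB b c).
Proof. by apply: OB_ext => S hS phi /=; rewrite /smul fsg_assoc. Qed.

(* The swap of the two-element left-zero semigroup is an automorphism without
   fixed points, so no element of it can be the value of a nullary operation. *)
Lemma nullary_OB_absurd (w : OB Sall 'I_0) : False.
Proof.
pose lz : fsg := @FSG 1 (fun x _ => x) (fun _ _ _ => erefl).
pose swap (x : car lz) : car lz := if x == ord0 then ord_max else ord0.
have swap_hom : is_hom swap by [].
pose phi (i : 'I_0) : car lz := ord0.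
have := ev_nat w I I swap_hom phi.
have -> : swap \o phi = phi by apply: functional_extensionality => -[].
by rewrite /swap; case: (ev w I phi) => -[|[|]].
Qed.

Lemma ev_in_splus_range (X : finType) (x0 : X) (w : OB Sall X) (P : fsg)
    (g : X -> car P) :
  splus (@smul P) (img g (fun _ => True)) (ev w (I : Sall P) g).
Proof.
pose R := splus (@smul P) (img g (fun _ => True)).
pose F := {y : car P | asbool (R y)}.
have R_mul (a b : F) : asbool (R (smul (val a) (val b))).
  by move: (valP a) (valP b) => /asboolP Ra /asboolP Rb; apply/asboolP; apply: splus_mul.
have R_g x : asbool (R (g x)) by apply/asboolP; apply: splus_incl; exists x.
pose op (a b : F) : F := exist (fun y => asbool (R y)) _ (R_mul a b).
have opA : associative op by move=> a b c; apply: val_inj; apply: fsg_assoc.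
pose y0 : F := exist (fun y => asbool (R y)) _ (R_g x0).
pose iota (a : car (fsg_of y0 opA)) := val (dec y0 a).
have iota_hom : is_hom iota by move=> a b; rewrite /iota dec_mul.
pose gF x : car (fsg_of y0 opA) := enc y0 (exist (fun y => asbool (R y)) _ (R_g x)).
have g_factor : g = iota \o gF.
  by apply: functional_extensionality => x; rewrite /iota /gF /= encK.
have := valP (dec y0 (ev w I gF)).
by rewrite -/(iota _) (ev_nat w I I iota_hom gF) -g_factor => /asboolP.
Qed.

Section Closure.
Variables (V : fsg -> Prop) (X : finType).

Lemma cl_mono (A B : OB V X -> Prop) p : (forall x, A x -> B x) -> cl A p -> cl B p.
Proof. by move=> AB H n qs; have [r [Ar Hr]] := H n qs; exists r; split => //; apply: AB. Qed.

Lemma cl_ext (A B : OB V X -> Prop) p : seteq A B -> cl A p -> cl B p.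
Proof. by move=> E; apply: cl_mono => x /E. Qed.

Lemma cl_refl (A : OB V X -> Prop) p : A p -> cl A p.
Proof. by move=> Ap n qs; exists p. Qed.

Lemma cl_mul (A B : OB V X -> Prop) a b :
  cl A a -> cl B b -> cl (setprod (@mulOB V X) A B) (mulOB a b).
Proof.
move=> Ha Hb n qs; have [r1 [Ar1 E1]] := Ha n qs; have [r2 [Br2 E2]] := Hb n qs.
exists (mulOB r1 r2); split; first by exists r1, r2.
by move=> i; rewrite /evp /= -!/(evp _ _) E1 E2.
Qed.

(* If [p] is outside both closures, concatenating the two witnessing families
   of points witnesses that it is outside the closure of the union. *)
Lemma cl_union (A B : OB V X -> Prop) p :
  cl (fun x => A x \/ B x) p -> cl A p \/ cl B p.
Proof.
move=> H; case: (classic (cl A p)) => [clA | nclA]; [by left | right].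
move=> n qs; apply: NNPP => nB.
have [n1 /not_all_ex_not [qs1 nA]] := not_all_ex_not _ _ nclA.
pose qs' (i : 'I_(n1 + n)) := match split i with inl a => qs1 a | inr b => qs b end.
have [r [[Ar|Br] Er]] := H _ qs'.
- apply: nA; exists r; split => // a.
  by have := Er (lshift n a); rewrite /qs' (unsplitK (inl a) : split _ = _).
- apply: nB; exists r; split => // b.
  by have := Er (rshift n1 b); rewrite /qs' (unsplitK (inr b) : split _ = _).
Qed.

Lemma OB_separated (a b : OB V X) : a <> b -> exists q : pt V X, evp a q <> evp b q.
Proof.
move=> ab; apply: NNPP => nq; apply: ab; apply: OB_ext => S hS phi.
by apply: NNPP => ne; apply: nq; exists (Pt hS phi).
Qed.

Lemma cl_fin (s : seq (OB V X)) p : cl (fun x => List.In x s) p -> List.In p s.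
Proof.
elim: s => [|r s IH] H.
  by have [r [[] _]] := H 0 (fun i => False_rect _ (notF (ltn_ord i))).
case: (cl_union H) => [clr | /IH]; [left | by right].
apply: NNPP => rp; have [q Hq] := OB_separated rp.
by have [_ [<- Er]] := clr 1 (fun _ => q); apply: Hq; apply: Er ord0.
Qed.

Variable sigma : signature.
Arguments sigma : clear implicits.

Lemma clo_mono (A B : OB V X -> Prop) p :
  (forall x, A x -> B x) -> clo sigma A p -> clo sigma B p.
Proof. by move=> AB [Omp clp]; split => //; apply: cl_mono clp. Qed.

Lemma clo_ext (A B : OB V X -> Prop) p : seteq A B -> clo sigma A p -> clo sigma B p.
Proof. by move=> E; apply: clo_mono => x /E. Qed.

Lemma sigsub_incl (A : OB V X -> Prop) a : A a -> sigsub sigma A a.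
Proof. by move=> Aa B AB _; apply: AB. Qed.

Lemma sigsub_apply (A : OB V X -> Prop) k (w : OB Sall 'I_k) (ps : 'I_k -> OB V X) :
  sigma k w -> (forall i, sigsub sigma A (ps i)) -> sigsub sigma A (applyOB w ps).
Proof. by move=> sw Hps B AB Bop; apply: (Bop k w ps sw) => i; apply: Hps. Qed.

Lemma Om_gen (x : X) : Om sigma (genOB V x).
Proof. by apply: sigsub_incl; exists x. Qed.

Lemma Om_mul : implicit_signature sigma ->
  forall a b, Om sigma a -> Om sigma b -> Om sigma (@mulOB V X a b).
Proof.
move=> [w [sw ev_w]] a b Oa Ob.
pose ps (i : 'I_2) := if i == ord0 then a else b.
have -> : mulOB a b = applyOB w ps by apply: OB_ext => S hS phi /=; rewrite ev_w.
by apply: sigsub_apply => // -[[|[|]]].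
Qed.

End Closure.

Lemma cl_apply (X : finType) (C : OB Sall X -> Prop)
    (C_mul : forall a b, C a -> C b -> C (mulOB a b)) k (w : OB Sall 'I_k)
    (ps : 'I_k -> OB Sall X) :
  (forall i, cl C (ps i)) -> cl C (applyOB w ps).
Proof.
case: k w ps => [w | k w] ps clps; first by case: (nullary_OB_absurd w).
move=> n qs.
pose args j := @Pt Sall 'I_k.+1 (ptS (qs j)) I (fun i => evp (ps i) (qs j)).
have [P [g factor]] := points_factor_through_fsg (List.map args (enum 'I_n)).
have approx y : splus (@smul P) (img g (fun _ => True)) y -> exists r, C r /\
    forall j (pi : car P -> car (ptS (qs j))), is_hom pi ->
      (forall i, pi (g i) = evp (ps i) (qs j)) -> pi y = evp r (qs j).
  move=> Hy; pattern y; apply: Hy => [_ [i [_ ->]] | a b [r1 [Cr1 E1]] [r2 [Cr2 E2]]].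
    have [r [Cr Er]] := clps i n qs.
    by exists r; split => // j pi _ pi_g; rewrite pi_g Er.
  exists (mulOB r1 r2); split; first exact: C_mul.
  by move=> j pi pi_hom pi_g; rewrite pi_hom (E1 j pi) ?(E2 j pi).
have [r [Cr Er]] := approx _ (@ev_in_splus_range _ ord0 w P g).
exists r; split => // j.
have [pi [pi_hom pi_g]] : exists pi : car P -> car (ptS (args j)),
    is_hom pi /\ forall i, pi (g i) = ptphi (args j) i.
  by apply: factor; apply: List.in_map; apply/InP; rewrite mem_enum.
rewrite -(Er j pi pi_hom pi_g) (ev_nat w I I pi_hom g) /evp /=.
by congr (ev w I _); apply: functional_extensionality => i /=; rewrite pi_g.
Qed.

Section Projection.
Variables (V : fsg -> Prop) (X : finType) (sigma : signature).
Arguments sigma : clear implicits.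
Hypothesis sigma_mul : implicit_signature sigma.

Notation pVX := (@pV V X).

Lemma pV_mul a b : pVX (mulOB a b) = mulOB (pVX a) (pVX b).
Proof. exact: OB_ext. Qed.

Lemma pV_apply k (w : OB Sall 'I_k) (ps : 'I_k -> OB Sall X) :
  pVX (applyOB w ps) = applyOB w (fun i => pVX (ps i)).
Proof. exact: OB_ext. Qed.

Lemma pV_gen (x : X) : pVX (genOB Sall x) = genOB V x.
Proof. exact: OB_ext. Qed.

Lemma Om_pV p : Om sigma p -> Om sigma (pVX p).
Proof.
move=> Omp; apply: (Omp (fun p => Om sigma (pVX p))).
  by move=> _ [x ->]; rewrite pV_gen; apply: Om_gen.
by move=> k w ps sw Hps; rewrite pV_apply; apply: sigsub_apply.
Qed.

Lemma cl_pV (A : OB Sall X -> Prop) p : cl A p -> cl (img pVX A) (pVX p).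
Proof.
move=> clp n qs.
have [r [Ar Er]] := clp n (fun i => @Pt Sall X (ptS (qs i)) I (ptphi (qs i))).
by exists (pVX r); split; [exists r | apply: Er].
Qed.

Lemma img_pV_clo (L : OB Sall X -> Prop) q :
  img pVX (clo sigma L) q -> clo sigma (img pVX L) q.
Proof. by move=> [p [[Omp clp] ->]]; split; [apply: Om_pV | apply: cl_pV]. Qed.

Definition closure_lifts (L : OB Sall X -> Prop) :=
  forall q, clo sigma (img pVX L) q -> img pVX (clo sigma L) q.

Lemma full_of_closure_lifts L :
  closure_lifts L -> seteq (img pVX (clo sigma L)) (clo sigma (img pVX L)).
Proof. by move=> liftL q; split; [apply: img_pV_clo | apply: liftL]. Qed.

Lemma closure_lifts_ext A B : seteq A B -> closure_lifts A -> closure_lifts B.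
Proof.
move=> E liftA q Hq.
have [p [Hp ->]] := liftA q (clo_ext (img_ext pVX (seteq_sym E)) Hq).
by exists p; split => //; apply: clo_ext Hp.
Qed.

Lemma closure_lifts_fin (s : seq (OB Sall X)) :
  (forall x, List.In x s -> Om sigma x) -> closure_lifts (fun x => List.In x s).
Proof.
move=> Om_s q [Omq clq].
have /cl_fin : cl (fun y => List.In y (List.map pVX s)) q by apply: cl_ext clq; apply: img_fin.
move/List.in_map_iff => [x [<- sx]].
by exists x; split => //; split; [apply: Om_s | apply: cl_refl].
Qed.

Lemma closure_lifts_union A B :
  closure_lifts A -> closure_lifts B -> closure_lifts (fun x => A x \/ B x).
Proof.
move=> liftA liftB q [Omq clq].
have [clA | clB] := cl_union (cl_ext (img_union pVX A B) clq).
- have [p [Hp ->]] := liftA q (conj Omq clA).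
  by exists p; split => //; apply: clo_mono Hp => x; left.
- have [p [Hp ->]] := liftB q (conj Omq clB).
  by exists p; split => //; apply: clo_mono Hp => x; right.
Qed.

Lemma closure_lifts_prod A B :
  seteq (clo sigma (setprod (@mulOB V X) (img pVX A) (img pVX B)))
        (setprod (@mulOB V X) (clo sigma (img pVX A)) (clo sigma (img pVX B))) ->
  closure_lifts A -> closure_lifts B -> closure_lifts (setprod (@mulOB Sall X) A B).
Proof.
move=> PR liftA liftB q Hq.
have /PR [q1 [q2 [/liftA [p1 [[Om1 cl1] ->]] [/liftB [p2 [[Om2 cl2] ->]] ->]]]] :=
  clo_ext (img_prod pV_mul A B) Hq.
exists (mulOB p1 p2); split; last by rewrite pV_mul.
by split; [apply: Om_mul | apply: cl_mul].
Qed.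

(* By the Pin-Reutenauer property it suffices to lift the σ-subalgebra
   generated by [cl p_V(A)]; the lifts of its generators lie in the closure
   of [A^+], which is closed under implicit operations by [cl_apply]. *)
Lemma closure_lifts_plus A :
  seteq (clo sigma (splus (@mulOB V X) (img pVX A))) (sigsub sigma (clo sigma (img pVX A))) ->
  closure_lifts A -> closure_lifts (splus (@mulOB Sall X) A).
Proof.
move=> PR liftA q /(clo_ext (img_plus pV_mul A)) /PR; apply.
  move=> a /liftA [p [Hp ->]]; exists p; split => //.
  by apply: clo_mono Hp => x; apply: splus_incl.
move=> k w ps sw Hps.
have [f Hf] : exists f : 'I_k -> OB Sall X,
    forall i, clo sigma (splus (@mulOB Sall X) A) (f i) /\ ps i = pVX (f i).
  apply: (choice (fun i p => clo sigma (splus (@mulOB Sall X) A) p /\ ps i = pVX p)).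
  by move=> i; have [p [Hp ->]] := Hps i; exists p.
exists (applyOB w f); split.
  split; first by apply: sigsub_apply => // i; case: (Hf i) => -[].
  apply: cl_apply => [a b | i]; first exact: splus_mul.
  by case: (Hf i) => -[].
rewrite pV_apply; congr (applyOB w _); apply: functional_extensionality => i.
by case: (Hf i).
Qed.

Lemma rat_img_pV L :
  rat (@mulOB Sall X) (Om sigma) L -> rat (@mulOB V X) (Om sigma) (img pVX L).
Proof.
elim => [s Om_s | A B _ rA _ rB | A B _ rA _ rB | A _ rA | A B _ rA E].
- apply: rat_ext _ (seteq_sym (img_fin pVX s)).
  by apply: rat_fin => _ /List.in_map_iff [p [<- sp]]; apply: Om_pV; apply: Om_s.
- exact: rat_ext (rat_union rA rB) (seteq_sym (img_union pVX A B)).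
- exact: rat_ext (rat_prod rA rB) (seteq_sym (img_prod pV_mul A B)).
- exact: rat_ext (rat_plus rA) (seteq_sym (img_plus pV_mul A)).
- exact: rat_ext rA (img_ext pVX E).
Qed.

End Projection.

Section RationalImages.
Variables (V : fsg -> Prop) (X : finType) (sigma : signature).
Arguments sigma : clear implicits.
Hypothesis sigma_mul : implicit_signature sigma.
Variables (T : Type) (m : T -> T -> T) (M : T -> Prop) (f : T -> OB Sall X).
Hypothesis f_mul : forall a b, f (m a b) = mulOB (f a) (f b).
Hypothesis f_Om : forall t, M t -> Om sigma (f t).
Variable C : (OB V X -> Prop) -> Prop.
Hypothesis C_PR : PR_for sigma C.
Hypothesis C_img : forall A, rat m M A -> C (img (@pV V X) (img f A)).

Lemma closure_lifts_rat L : rat m M L -> closure_lifts V sigma (img f L).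
Proof.
elim => [s Ms | A B _ liftA _ liftB | A B rA liftA rB liftB | A rA liftA | A B _ liftA E].
- apply: closure_lifts_ext (seteq_sym (img_fin f s)) _.
  by apply: closure_lifts_fin => _ /List.in_map_iff [t [<- st]]; apply: f_Om; apply: Ms.
- apply: closure_lifts_ext (seteq_sym (img_union f A B)) _.
  exact: closure_lifts_union.
- apply: closure_lifts_ext (seteq_sym (img_prod f_mul A B)) _.
  by apply: closure_lifts_prod => //; apply: (C_PR (C_img rA) (C_img rB)).1.
- apply: closure_lifts_ext (seteq_sym (img_plus f_mul A)) _.
  by apply: closure_lifts_plus => //; apply: (C_PR (C_img rA) (C_img rA)).2.
- exact: closure_lifts_ext (img_ext f E) liftA.
Qed.

End RationalImages.

Lemma foldl_mul_gen V X (a b : OB V X) (l : seq X) :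
  foldl (fun acc y => mulOB acc (genOB V y)) (mulOB a b) l =
  mulOB a (foldl (fun acc y => mulOB acc (genOB V y)) b l).
Proof. by elim: l b => //= y l IH b; rewrite mulOB_assoc IH. Qed.

Lemma word_mul (X : finType) (u v : X * seq X) : word (nwmul u v) = mulOB (word u) (word v).
Proof. by case: u v => x u [y v]; rewrite /word /nwmul /= foldl_cat /= foldl_mul_gen. Qed.

Lemma Om_word (X : finType) (sigma : signature) :
  implicit_signature sigma -> forall u : X * seq X, Om sigma (word u).
Proof.
move=> sigma_mul [x u]; rewrite /word /=.
have : Om sigma (genOB Sall x) by apply: Om_gen.
elim: u (genOB Sall x) => //= y u IH p Omp.
by apply: IH; apply: Om_mul => //; apply: Om_gen.
Qed.

Unset Implicit Arguments.

Theorem corollary4p2 (sigma : signature) (V : fsg -> Prop) :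
  implicit_signature sigma -> pseudovariety V ->
  (sigma_PR V sigma -> sigma_full V sigma) /\
  (strongly_sigma_PR V sigma -> strongly_sigma_full V sigma).
Proof.
move=> sigma_mul _; split=> PR X.
- move=> L' [L [ratL E]]; apply: full_of_closure_lifts.
  apply: closure_lifts_ext (seteq_sym E) _.
  apply: (closure_lifts_rat sigma_mul (@word_mul X) (fun u _ => Om_word sigma_mul u)
            (PR X) _ ratL).
  by move=> A ratA; exists A; split => //; apply: img_comp.
- move=> L ratL; apply: full_of_closure_lifts.
  apply: closure_lifts_ext (img_id L) _.
  apply: (closure_lifts_rat sigma_mul (m := @mulOB Sall X) (M := Om sigma) (f := id)
            (fun _ _ => erefl) (fun _ Omt => Omt) (PR X) _ ratL).
  move=> A ratA.
  exact: rat_ext (rat_img_pV V ratA) (img_ext _ (seteq_sym (img_id A))).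
Qed.
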